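(* Let $N=\{1,\dots,n\}$, let $w:2^N\to\mathbb{R}$ be the characteristic function of the data sharing game (with $w(\emptyset)=0$), let $\epsilon\ge 0$, and let $(\pi_0,\pi_1,\dots,\pi_n)$ be any vector in the strong $\epsilon$-core $$\mathrm{Core}_\epsilon(N)=\Big\{(\pi_0,\dots,\pi_n)\in\mathbb{R}^{n+1}_{+}:\ \sum_{i\in N}\pi_i+\pi_0=w(N),\ \sum_{i\in S}\pi_i+\pi_0\ge w(S)-\epsilon\ \text{for all } S\in 2^N\setminus\{\emptyset\}\Big\}.$$ Then for every $i\in N$, $\pi_i\le \pi_i^{VCG}+\epsilon$, where $\pi_i^{VCG}=w(N)-w(N\setminus\{i\})$.
   Context: Data sharing game: participants $N=\{1,\dots,n\}$ with (input) datasets $\hat D_i$, and a server $0$ with budget $b_0$. $F$ maps a collection of datasets to a global model, $A$ is an accuracy metric, $h_i=k_iA$ with $k_i>0$, and $v_i(M,\hat D_i)=\mathbb{E}[\max\{h_i(M)-h_i(F(\hat D_i)),0\}]$. The characteristic function is $w(S)=\sum_{i\in S}v_i(F(\hat D_S),\hat D_i)+b_0$ for nonempty $S\subseteq N$ (where $\hat D_S=\{\hat D_i\}_{i\in S}$) and $w(\emptyset)=0$. $\pi_i^{VCG}$ is called the VCG surplus of participant $i$. *)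

From mathcomp Require Import all_boot all_order all_algebra.
Set Implicit Arguments. Unset Strict Implicit. Unset Printing Implicit Defensive.
Import Order.TTheory GRing.Theory Num.Theory.
Local Open Scope ring_scope.

(* Participants N = {1..n} are represented by 'I_n; the server 0 is separate.
   Data sharing game characteristic function:
     w(S) = sum_{i in S} v_i(F(D_S), D_i) + b0   (S nonempty),  w(emptyset) = 0.
   [F S] stands for the global model F(\hat D_S) trained on the datasets of S,
   and [v i M] stands for v_i(M, \hat D_i) (an expected accuracy gain). *)
Definition dsg_w (R : numDomainType) (n : nat) (Model : Type)
  (F : {set 'I_n} -> Model) (v : 'I_n -> Model -> R) (b0 : R)
  (S : {set 'I_n}) : R :=
  if S == set0 then 0 else \sum_(i in S) v i (F S) + b0.

Definition strong_eps_core (R : numDomainType) (n : nat)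
  (w : {set 'I_n} -> R) (eps : R) (pi0 : R) (pi : 'I_n -> R) : Prop :=
  [/\ 0 <= pi0, (forall i, 0 <= pi i),
      \sum_(i in [set: 'I_n]) pi i + pi0 = w [set: 'I_n] &
      (forall S : {set 'I_n}, S != set0 -> \sum_(i in S) pi i + pi0 >= w S - eps)].

Definition vcg_surplus (R : numDomainType) (n : nat)
  (w : {set 'I_n} -> R) (i : 'I_n) : R :=
  w [set: 'I_n] - w ([set: 'I_n] :\ i).

From mathcomp Require Import all_boot all_order all_algebra.
Import Order.TTheory GRing.Theory Num.Theory.
Local Open Scope ring_scope.

(* Efficiency splits w(N) into pi_i plus the payoff of the coalition N \ {i}
   (together with the server), and the epsilon-core bounds the latter below by
   w(N \ {i}) - eps; when N \ {i} is empty, w(emptyset) <= 0 <= pi_0 plays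
   that role. *)

Section StrongEpsCore.

Variables (R : numDomainType) (n : nat) (w : {set 'I_n} -> R).
Variables (eps pi0 : R) (pi : 'I_n -> R).
Hypotheses (w0_le0 : w set0 <= 0) (eps_ge0 : 0 <= eps).
Hypothesis core : strong_eps_core w eps pi0 pi.

Lemma strong_eps_core_coalition (S : {set 'I_n}) :
  w S - eps <= \sum_(i in S) pi i + pi0.
Proof.
have [_ _ _ coalition] := core.
have [->|/coalition //] := eqVneq S set0.
have [pi0_ge0 _ _ _] := core.
by rewrite big_set0 add0r lerBlDr (le_trans w0_le0) ?addr_ge0.
Qed.

Lemma strong_eps_core_le_vcg (i : 'I_n) : pi i <= vcg_surplus w i + eps.
Proof.
have [_ _ efficiency _] := core.
rewrite /vcg_surplus -efficiency (big_setD1 i) ?in_setT //=.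
by rewrite -!addrA lerDl addrA addrCA addrC subr_ge0 -lerBlDr
  strong_eps_core_coalition.
Qed.

End StrongEpsCore.

Lemma dsg_w0 (R : numDomainType) (n : nat) (Model : Type)
  (F : {set 'I_n} -> Model) (v : 'I_n -> Model -> R) (b0 : R) :
  dsg_w F v b0 set0 = 0.
Proof. by rewrite /dsg_w eqxx. Qed.

Theorem lemma1 (R : realFieldType) (n : nat) (Model : Type)
  (F : {set 'I_n} -> Model) (v : 'I_n -> Model -> R) (b0 : R)
  (eps : R) (pi0 : R) (pi : 'I_n -> R) :
  0 <= eps ->
  strong_eps_core (dsg_w F v b0) eps pi0 pi ->
  forall i : 'I_n, pi i <= vcg_surplus (dsg_w F v b0) i + eps.
Proof.
by apply: strong_eps_core_le_vcg; rewrite dsg_w0.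
Qed.
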